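(* Let $p$ be an odd prime. Then $$2\sum_{k=(p+1)/2}^{[3p/4]}\binom{4k}{2k}\frac1{32^k}\equiv-4\sum_{k=1}^{[\frac{p+1}4]}\binom{4k-2}{2k-1}\frac1{32^k}\equiv\begin{cases}0\pmod p&\text{if }p\equiv\pm1\pmod8,\\1\pmod p&\text{if }p\equiv\pm5\pmod{16},\\-1\pmod p&\text{if }p\equiv\pm3\pmod{16}.\end{cases}$$
   Context: $[x]$ is the greatest integer $\le x$. *)

From HB Require Import structures.
From mathcomp Require Import all_boot all_order all_algebra.
Set Implicit Arguments. Unset Strict Implicit. Unset Printing Implicit Defensive.
Import Order.TTheory GRing.Theory Num.Theory.

(* Congruence of rationals modulo a prime p: x ≡ y (mod p) iff p divides the
   numerator of the reduced fraction x - y (equivalently x - y = p*a/b with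
   p not dividing b). *)
Definition rat_cong (p : nat) (x y : rat) : Prop :=
  (p%:Z %| numq (x - y))%Z.

From HB Require Import structures.
From mathcomp Require Import all_boot all_order all_algebra.
From mathcomp Require Import closed_field.
From mathcomp Require Import ring zify.
Set Implicit Arguments. Unset Strict Implicit. Unset Printing Implicit Defensive.
Import Order.TTheory GRing.Theory Num.Theory.
Local Open Scope ring_scope.

(* Both sums are dyadic rationals, so it suffices to compare their images in
   a field F of characteristic p; we take F algebraically closed.  With
   n = (p-1)/2 and U = \sum_(j < [(p+1)/4]) C(4j+2, 2j+1) / 32^(j+1):
   - S2 = -4 U by reindexing, and 32^n S1 = 4 U in F by Lucas' theorem
     C(2p + a, p + b) = 2 C(a, b) (mod p);
   - C(2m, m) = (-4)^m C(n, m) in F, so S2 = \sum_j C(n, 2j+1) 2^-(j+1) is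
     the odd part of a binomial expansion;
   - choosing z in F with z^8 = -1 and c_k = z^k + z^-k ("2 cos(k pi/8)"),
     s = c_2 is a square root of 2, 1 + s/2 = c_1^2 / 2 and 1 - s/2 = c_3^2 / 2,
     which gives 4 2^n S2 = c_3 c_1^p - c_1 c_3^p;
   - the Frobenius maps c_k to c_(kp), which only depends on p mod 16; this
     yields S2 = 0, 1 or -1 according to the class of p, together with
     2^n = +-1, whence S1 = S2 because 32^n S1 = -S2. *)

Lemma central_binom_rec m :
  (m.+1 * 'C((m.+1).*2, m.+1) = 2 * m.*2.+1 * 'C(m.*2, m))%N.
Proof.
have eS := mul_bin_diag (m.+1).*2 m.
have eC := mul_bin_diag m.*2.+1 m.
have sym : 'C(m.*2.+1, m.+1) = 'C(m.*2.+1, m).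
  by rewrite -bin_sub; [congr binomial; lia | lia].
rewrite doubleS /= in eS; rewrite /= in eC.
rewrite doubleS -eS -mulnA eC -sym; nia.
Qed.

Lemma coef_XaddC1_exp (R : nzRingType) N i :
  (('X + 1 : {poly R}) ^+ N)`_i = 'C(N, i)%:R.
Proof.
elim: N i => [|N IH] i; first by rewrite expr0 coef1; case: i.
rewrite exprSr mulrDr mulr1 coefD coefMX !IH; case: i => [|i] /=.
  by rewrite add0r !bin0.
by rewrite binS natrD addrC.
Qed.

Section CharacteristicP.
Variables (F : fieldType) (p : nat).
Hypothesis pc : p \in [pchar F].

Lemma natf_small_neq0 m : (0 < m < p)%N -> m%:R != 0 :> F.
Proof.
case/andP=> m_gt0 m_lt_p; rewrite -(dvdn_pcharf pc).
by apply/negP => /(dvdn_leq m_gt0); rewrite leqNgt m_lt_p.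
Qed.

(* For p = 2n+1 one has n = -1/2 in F, hence
   C(2m, m) = (-4)^m C(-1/2, m) = (-4)^m C(n, m) for m <= n. *)
Lemma central_binom_charp n m : p = n.*2.+1 -> (m <= n)%N ->
  'C(m.*2, m)%:R = 'C(n, m)%:R * (-4) ^+ m :> F.
Proof.
move=> pE; elim: m => [|m IH] lt_m_n; first by rewrite !bin0 expr0 mulr1.
have nz2 : 2%:R != 0 :> F by apply: natf_small_neq0; lia.
have nE : n%:R = - 2%:R^-1 :> F.
  apply: (mulfI nz2); rewrite mulrN mulfV //; apply/eqP; rewrite -subr_eq0 opprK.
  by rewrite -(pcharf0 pc) pE -[n.*2.+1]addn1 -mul2n natrD natrM.
apply: (mulfI (natf_small_neq0 (_ : 0 < m.+1 < p)%N)); first by lia.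
rewrite -natrM central_binom_rec natrM IH ?(ltnW lt_m_n) //.
rewrite exprS mulrCA (mulrA _ 'C(n, m.+1)%:R) -natrM mul_bin_left.
rewrite !natrM natrB ?(ltnW lt_m_n) // nE -[m.*2.+1]addn1 -mul2n natrD natrM.
by field.
Qed.

(* A case of Lucas' theorem: C(2p + a, p + b) = C(2, 1) C(a, b) mod p. *)
Lemma binom_lucas2 a b : (a < p)%N -> (b <= a)%N ->
  'C(p.*2 + a, p + b)%:R = 2 * 'C(a, b)%:R :> F.
Proof.
move=> lt_a_p le_b_a.
have pc' : p \in [pchar {poly F}] by rewrite pchar_poly.
have frob : ('X + 1 : {poly F}) ^+ p = 'X^p + 1.
  by rewrite -(pFrobenius_autE pc') rmorphD rmorph1.
have expand : ('X + 1 : {poly F}) ^+ (p.*2 + a) =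
   'X^(p + p) * ('X + 1) ^+ a + ('X^p * ('X + 1) ^+ a) *+ 2 + ('X + 1) ^+ a.
  by rewrite -addnn !exprD frob; ring.
rewrite -!coef_XaddC1_exp expand !coefD !coefXnM !coef_XaddC1_exp ifT; last by lia.
rewrite ifF; last by lia.
rewrite (@bin_small a (p + b)); last by lia.
by rewrite addnC addnK add0r addr0 -mulr2n mulr_natl.
Qed.

End CharacteristicP.

Lemma big_ord_double (V : nmodType) (h : nat -> V) K :
  \sum_(i < K.*2) h i = \sum_(j < K) (h j.*2 + h j.*2.+1).
Proof.
elim: K => [|K IH]; first by rewrite !big_ord0.
by rewrite doubleS !big_ord_recr /= IH addrA.
Qed.

Lemma binom_odd_part (R : comPzRingType) (x : R) n K : (n <= K.*2)%N ->
  (x + 1) ^+ n - (- x + 1) ^+ n =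
  2 * \sum_(j < K) 'C(n, j.*2.+1)%:R * x ^+ j.*2.+1.
Proof.
move=> le_n_2K; pose g i := (x ^+ i - (- x) ^+ i) *+ 'C(n, i).
have g_even j : g j.*2 = 0 by rewrite /g -mul2n !exprM sqrrN subrr mul0rn.
have g_big i : (n < i)%N -> g i = 0 by move=> lt_n_i; rewrite /g bin_small.
have widen m1 m2 : (m1 <= m2)%N -> {in [pred i | m1 <= i < m2]%N, g =1 fun=> 0} ->
    \sum_(i < m1) g i = \sum_(i < m2) g i.
  move=> le_m12 g0; rewrite (big_ord_widen _ g le_m12) big_mkcond.
  apply: eq_bigr => i _; case: ltnP => // le_m1_i.
  by rewrite g0 // inE le_m1_i ltn_ord.
have lhsE : (x + 1) ^+ n - (- x + 1) ^+ n = \sum_(i < n.+1) g i.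
  by rewrite !exprD1n -sumrB; apply: eq_bigr => i _; rewrite /g mulrnBl.
have wideL : \sum_(i < n.+1) g i = \sum_(i < (K.+1).*2) g i.
  by apply: widen => [|i /andP[lt_n_i _]]; [lia | exact: g_big].
have wideR : \sum_(i < K.*2) g i = \sum_(i < (K.+1).*2) g i.
  apply: widen => [|i /andP[le_2K_i lt_i]]; first lia.
  have [->|ne_i] := eqVneq i K.*2; first exact: g_even.
  by apply: g_big; rewrite doubleS in lt_i; lia.
rewrite lhsE wideL -wideR big_ord_double mulr_sumr; apply: eq_bigr => j _.
rewrite g_even add0r /g exprNn -signr_odd /= odd_double /= expr1 mulN1r opprK.
by rewrite -mulr_natl; ring.
Qed.

Section SixteenthRoot.
Variables (R : comNzRingType) (z : R).
Hypothesis z8 : z ^+ 8 = -1.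

(* z is a primitive 16th root of unity and z^15 = z^-1, so that
   cos16 k = z^k + z^-k plays the role of 2 cos(k pi / 8). *)
Definition cos16 k := z ^+ k + z ^+ (15 * k).

Lemma expr_z_mod16 k : z ^+ k = z ^+ (k %% 16).
Proof.
by rewrite {1}(divn_eq k 16) exprD mulnC exprM (_ : 16 = 8 * 2)%N // exprM z8
   sqrrN expr1n expr1n mul1r.
Qed.

Lemma expr_z_congr k m : k = m %[mod 16] -> z ^+ k = z ^+ m.
Proof. by move=> km; rewrite expr_z_mod16 km -expr_z_mod16. Qed.

Lemma cos16_even k m : k = m %[mod 16] \/ k + m = 0 %[mod 16] -> cos16 k = cos16 m.
Proof.
rewrite /cos16 => -[km|km].
  by rewrite (expr_z_congr km) (@expr_z_congr (15 * k) (15 * m)) //; lia.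
by rewrite addrC (@expr_z_congr k (15 * m)) ?(@expr_z_congr (15 * k) m) //; lia.
Qed.

Lemma cos16_odd k m : k = m + 8 %[mod 16] \/ k + m + 8 = 0 %[mod 16] ->
  cos16 k = - cos16 m.
Proof.
have cos16_shift j : cos16 (j + 8) = - cos16 j.
  rewrite /cos16 (@expr_z_congr (15 * (j + 8)) (15 * j + 8)); last by lia.
  by rewrite !exprD z8 opprD !mulrN1.
move=> km; rewrite -cos16_shift; apply: cos16_even; lia.
Qed.

Lemma cos16M a b : cos16 a * cos16 b = cos16 (a + b) + cos16 (a + 15 * b).
Proof.
rewrite /cos16 (@expr_z_congr (15 * (a + 15 * b)) (15 * a + b)); last by lia.
by rewrite !mulnDr !exprD; ring.
Qed.

Lemma cos16_0 : cos16 0 = 2.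
Proof. by rewrite /cos16 muln0 expr0. Qed.

Lemma cos16_4 : cos16 4 = 0.
Proof. by rewrite /cos16 (@expr_z_congr (15 * 4) (4 + 8)) // exprD z8 mulrN1 subrr. Qed.

Lemma cos16_2_sqr : cos16 2 ^+ 2 = 2.
Proof.
rewrite expr2 cos16M cos16_4 add0r -cos16_0; apply: cos16_even; lia.
Qed.

Lemma cos16_1_sqr : cos16 1 ^+ 2 = 2 + cos16 2.
Proof.
rewrite expr2 cos16M addrC -cos16_0 (@cos16_even (1 + 15 * 1) 0) //; lia.
Qed.

Lemma cos16_3_sqr : cos16 3 ^+ 2 = 2 - cos16 2.
Proof.
rewrite expr2 cos16M addrC -cos16_0 (@cos16_even (3 + 15 * 3) 0); last by lia.
by rewrite (@cos16_odd (3 + 3) 2) //; lia.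
Qed.

Lemma cos16_1M3 : cos16 1 * cos16 3 = cos16 2.
Proof. by rewrite cos16M cos16_4 add0r; apply: cos16_even; lia. Qed.

Lemma cos16_sqr_sum : cos16 3 * cos16 3 + cos16 1 * cos16 1 = 4.
Proof. by rewrite -!expr2 cos16_1_sqr cos16_3_sqr; ring. Qed.

Lemma cos16_frob p (pc : p \in [pchar R]) k : cos16 k ^+ p = cos16 (k * p).
Proof.
rewrite -(pFrobenius_autE pc) rmorphD /= !pFrobenius_autE.
by rewrite /cos16 -!exprM mulnA.
Qed.

End SixteenthRoot.

Definition S1F (R : fieldType) (p : nat) : R :=
  2 * \sum_((p.+1)./2 <= k < ((3 * p) %/ 4).+1) ('C(4 * k, 2 * k))%:R / 32%:R ^+ k.
Definition S2F (R : fieldType) (p : nat) : R :=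
  - 4%:R * \sum_(1 <= k < ((p.+1) %/ 4).+1) ('C(4 * k - 2, 2 * k - 1))%:R / 32%:R ^+ k.
Definition Usum (R : fieldType) (p : nat) : R :=
  \sum_(j < (p.+1) %/ 4) 'C((j.*2.+1).*2, j.*2.+1)%:R / 32%:R ^+ j.+1.

Lemma S2F_Usum (R : fieldType) p : S2F R p = - 4%:R * Usum R p.
Proof.
rewrite /S2F /Usum big_add1 /= big_mkord; congr (_ * _); apply: eq_bigr => j _.
have -> : (4 * j.+1 - 2 = (j.*2.+1).*2)%N by lia.
by have -> : (2 * j.+1 - 1 = j.*2.+1)%N by lia.
Qed.

Section OddPrime.
Variables (F : fieldType) (p : nat).
Hypotheses (pc : p \in [pchar F]) (p_odd : odd p).

Local Notation n := p./2.

Lemma p_half : p = n.*2.+1.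
Proof. by rewrite -[LHS]odd_double_half p_odd. Qed.

Lemma two_neq0 : 2 != 0 :> F.
Proof.
apply: (natf_small_neq0 pc); have := prime_gt1 (pcharf_prime pc).
by case: (p) p_odd => [|[|[]]].
Qed.

Lemma pow2_neq0 e : 2 ^+ e != 0 :> F.
Proof. exact: expf_neq0 two_neq0. Qed.

Lemma four_neq0 : 4 != 0 :> F.
Proof. by rewrite (_ : 4 = 2 * 2)%N // natrM mulf_neq0 ?two_neq0. Qed.

Lemma expr_p (x : F) : x ^+ p = x * (x ^+ 2) ^+ n.
Proof. by rewrite -exprM {1}p_half exprS mul2n. Qed.

(* Lucas' theorem moves the first sum down to U: 32^n S1 = 4 U. *)
Lemma S1F_Usum : S1F F p * 32%:R ^+ n = 4%:R * Usum F p.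
Proof.
rewrite /S1F /Usum (_ : (p.+1)./2 = 0 + n.+1)%N; last by rewrite {1}p_half; lia.
rewrite big_addn (_ : ((3 * p) %/ 4).+1 - n.+1 = (p.+1) %/ 4)%N; last first.
  by rewrite {1 2}p_half; lia.
rewrite big_mkord -mulrA mulr_suml !mulr_sumr; apply: eq_bigr => j _.
have lt_j := ltn_ord j.
rewrite (_ : 4 * (j + n.+1) = p.*2 + (j.*2.+1).*2)%N; last by rewrite {2}p_half; lia.
rewrite (_ : 2 * (j + n.+1) = p + j.*2.+1)%N; last by rewrite {2}p_half; lia.
rewrite (binom_lucas2 pc); [|lia|lia].
rewrite (_ : j + n.+1 = j.+1 + n)%N ?exprD; last by lia.
have nz32 : 32%:R != 0 :> F by rewrite (_ : 32 = 2 ^ 5)%N // natrX pow2_neq0.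
by field; rewrite !expf_neq0.
Qed.

(* Since C(2m, m) = (-4)^m C(n, m), the second sum is an odd binomial sum:
   S2 = \sum_j C(n, 2j+1) / 2^(j+1). *)
Lemma S2F_binom : S2F F p =
  \sum_(j < (p.+1) %/ 4) 'C(n, j.*2.+1)%:R * (2^-1) ^+ j.+1.
Proof.
rewrite S2F_Usum /Usum mulr_sumr; apply: eq_bigr => j _.
have lt_j := ltn_ord j.
rewrite (central_binom_charp pc p_half); last by rewrite {2}p_half; lia.
have e4 : (-4 : F) ^+ j.*2.+1 = - 4%:R * 16%:R ^+ j.
  by rewrite exprS -mul2n exprM sqrrN expr2 -natrM.
have e32 : (32%:R : F) ^+ j.+1 = 2 ^+ j.+1 * 16%:R ^+ j.+1.
  by rewrite -exprMn -natrM.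
have nz16 : 16%:R != 0 :> F by rewrite (_ : 16 = 2 ^ 4)%N // natrX pow2_neq0.
by rewrite e4 e32 exprVn !exprS; field; rewrite pow2_neq0 two_neq0 nz16 expf_neq0.
Qed.

(* S1 and S2 are tied by the power 2^n, which will turn out to be a sign. *)
Lemma S1F_S2F : S1F F p * (2 ^+ n) ^+ 5 = - S2F F p.
Proof.
by rewrite S2F_Usum mulNr opprK -S1F_Usum -exprM mulnC exprM -natrX.
Qed.

Section EighthRootOfMinusOne.
Variable z : F.
Hypothesis z8 : z ^+ 8 = -1.

Local Notation w := (cos16 z 1).
Local Notation s := (cos16 z 2).
Local Notation v := (cos16 z 3).

(* Expressing 1 +- 1/sqrt 2 through w^2/2 and v^2/2, the odd binomial sum
   becomes 4 2^n S2 = v w^p - w v^p. *)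
Lemma S2F_cos16 : 4 * 2 ^+ n * S2F F p = v * w ^+ p - w * v ^+ p.
Proof.
set K := ((p.+1) %/ 4)%N.
have le_n_2K : (n <= K.*2)%N by rewrite /K {2}p_half; lia.
have nz2 := two_neq0; have nz4 := four_neq0.
pose y := s / 2.
have y2 : y ^+ 2 = 2^-1 by rewrite expr_div_n (cos16_2_sqr z8); field; rewrite ?nz2 ?nz4.
have wE : y + 1 = w ^+ 2 / 2 by rewrite (cos16_1_sqr z8) /y; field; rewrite ?nz2 ?nz4.
have vE : - y + 1 = v ^+ 2 / 2 by rewrite (cos16_3_sqr z8) /y; field; rewrite ?nz2 ?nz4.
have sumE : \sum_(j < K) 'C(n, j.*2.+1)%:R * (2^-1) ^+ j.+1
    = y * \sum_(j < K) 'C(n, j.*2.+1)%:R * y ^+ j.*2.+1.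
  rewrite mulr_sumr; apply: eq_bigr => j _.
  by rewrite -y2 -exprM mulrCA -exprS mul2n.
have := binom_odd_part y le_n_2K.
rewrite S2F_binom sumE wE vE !expr_div_n -!exprM => oddE.
have -> : \sum_(j < K) 'C(n, j.*2.+1)%:R * y ^+ j.*2.+1
    = (w ^+ (2 * n) - v ^+ (2 * n)) / 2 ^+ n.+1.
  by apply: (mulfI nz2); rewrite -oddE exprS; field; rewrite pow2_neq0.
rewrite !expr_p !exprM /y -(cos16_1M3 z8) [2 ^+ n.+1]exprS.
by field; rewrite ?pow2_neq0 ?nz2.
Qed.

(* Since s^2 = 2, the Frobenius image of s is s^p = 2^n s; this identifies the
   sign 2^n (Euler's criterion for 2). *)
Lemma two_pow_half_sign e : s ^+ p = e * s -> 2 ^+ n = e.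
Proof.
have s_neq0 : s != 0.
  by have := two_neq0; rewrite -(cos16_2_sqr z8) expf_eq0.
move=> spE; apply: (mulIf s_neq0); rewrite -spE expr_p (cos16_2_sqr z8).
exact: mulrC.
Qed.

Lemma S2F_eval e A B : s ^+ p = e * s -> w ^+ p = A -> v ^+ p = B ->
  S2F F p = (v * A - w * B) / (4 * e).
Proof.
move=> /two_pow_half_sign <- <- <-; rewrite -S2F_cos16.
by field; rewrite four_neq0 pow2_neq0.
Qed.

(* p = +-1 mod 8: the Frobenius fixes s and multiplies w, v by a common sign. *)
Lemma S2F_pm1_mod8 : (p %% 8 = 1 \/ p %% 8 = 7)%N -> S2F F p = 0 /\ 2 ^+ n = 1 :> F.
Proof.
move=> p_mod8.
have sp : s ^+ p = 1 * s by rewrite mul1r (cos16_frob z pc); apply: (cos16_even z8); lia.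
suff [eps [wp vp]] : exists eps : F, w ^+ p = eps * w /\ v ^+ p = eps * v.
  split; last exact: two_pow_half_sign sp.
  by rewrite (S2F_eval sp wp vp); field; rewrite four_neq0.
have [p_mod16|p_mod16] : (p %% 16 = 1 \/ p %% 16 = 15)%N \/ (p %% 16 = 7 \/ p %% 16 = 9)%N.
  by lia.
- by exists 1; rewrite !mul1r !(cos16_frob z pc); split; apply: (cos16_even z8); lia.
- by exists (-1); rewrite !mulN1r !(cos16_frob z pc); split; apply: (cos16_odd z8); lia.
Qed.

(* p = +-3 mod 16: the Frobenius maps s, w, v to -s, v, -w. *)
Lemma S2F_pm3_mod16 : (p %% 16 = 3 \/ p %% 16 = 13)%N -> S2F F p = -1 /\ 2 ^+ n = -1 :> F.
Proof.
move=> p_mod16.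
have sp : s ^+ p = -1 * s by rewrite mulN1r (cos16_frob z pc); apply: (cos16_odd z8); lia.
have wp : w ^+ p = v by rewrite (cos16_frob z pc); apply: (cos16_even z8); lia.
have vp : v ^+ p = - w by rewrite (cos16_frob z pc); apply: (cos16_odd z8); lia.
split; last exact: two_pow_half_sign sp.
rewrite (S2F_eval sp wp vp) mulrN opprK (cos16_sqr_sum z8).
by field; rewrite ?oppr_eq0 ?four_neq0 ?oner_neq0.
Qed.

(* p = +-5 mod 16: the Frobenius maps s, w, v to -s, -v, w. *)
Lemma S2F_pm5_mod16 : (p %% 16 = 5 \/ p %% 16 = 11)%N -> S2F F p = 1 /\ 2 ^+ n = -1 :> F.
Proof.
move=> p_mod16.
have sp : s ^+ p = -1 * s by rewrite mulN1r (cos16_frob z pc); apply: (cos16_odd z8); lia.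
have wp : w ^+ p = - v by rewrite (cos16_frob z pc); apply: (cos16_odd z8); lia.
have vp : v ^+ p = w by rewrite (cos16_frob z pc); apply: (cos16_even z8); lia.
split; last exact: two_pow_half_sign sp.
rewrite (S2F_eval sp wp vp) mulrN -opprD (cos16_sqr_sum z8).
by field; rewrite ?oppr_eq0 ?four_neq0 ?oner_neq0.
Qed.

(* In every case S1 = S2, using S1 2^(5n) = -S2 and 2^n = +-1. *)
Lemma S1F_eq_S2F : S1F F p = S2F F p.
Proof.
have p_mod2 : (p %% 2 = 1)%N by rewrite modn2 p_odd.
have sign5 : (-1) ^+ 5 = -1 :> F by rewrite !exprS expr0 mulr1 !mulN1r !opprK.
have := S1F_S2F; have [/S2F_pm1_mod8|[/S2F_pm3_mod16|/S2F_pm5_mod16]] :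
  (p %% 8 = 1 \/ p %% 8 = 7)%N \/ (p %% 16 = 3 \/ p %% 16 = 13)%N \/
  (p %% 16 = 5 \/ p %% 16 = 11)%N by lia.
- by move=> [-> ->]; rewrite expr1n mulr1 oppr0.
- by move=> [-> ->]; rewrite sign5 mulrN1 => /oppr_inj.
- by move=> [-> ->]; rewrite sign5 mulrN1 => /oppr_inj.
Qed.

End EighthRootOfMinusOne.
End OddPrime.

(* A field element given uniformly in every field R (e.g. by a formula with
   integer coefficients) is dyadic if it equals a / 2^e whenever 2 != 0 in R,
   with a and e independent of R.  Such an element can be reduced modulo any
   odd prime. *)
Definition dyadic (X : forall R : fieldType, R) : Prop :=
  exists (a : int) (e : nat), forall R : fieldType, 2 != 0 :> R -> X R = a%:~R / 2 ^+ e.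

Lemma dyadic_ext (X Y : forall R : fieldType, R) :
  (forall R, X R = Y R) -> dyadic X -> dyadic Y.
Proof. by move=> XY [a [e XE]]; exists a, e => R nz2; rewrite -XY XE. Qed.

Lemma dyadic_nat (m : nat) : dyadic (fun R => m%:R).
Proof. by exists m, 0 => R _; rewrite divr1. Qed.

Lemma dyadic_inv32 k : dyadic (fun R => (32%:R ^+ k)^-1).
Proof.
by exists 1, (5 * k) => R _; rewrite (_ : 32 = 2 ^ 5)%N // natrX -exprM mul1r.
Qed.

Lemma dyadicN X : dyadic X -> dyadic (fun R => - X R).
Proof. by move=> [a [e XE]]; exists (- a), e => R nz2; rewrite XE // rmorphN mulNr. Qed.

Lemma dyadicD X Y : dyadic X -> dyadic Y -> dyadic (fun R => X R + Y R).
Proof.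
move=> [a [e XE]] [b [f YE]]; exists (a * 2 ^+ f + b * 2 ^+ e), (e + f).
move=> R nz2; rewrite XE // YE // rmorphD !rmorphM /= !rmorphXn exprD.
by field; rewrite !expf_neq0.
Qed.

Lemma dyadicM X Y : dyadic X -> dyadic Y -> dyadic (fun R => X R * Y R).
Proof.
move=> [a [e XE]] [b [f YE]]; exists (a * b), (e + f) => R nz2.
by rewrite XE // YE // rmorphM exprD; field; rewrite !expf_neq0.
Qed.

Lemma dyadic_sum m n (X : nat -> forall R : fieldType, R) :
  (forall k, dyadic (X k)) -> dyadic (fun R => \sum_(m <= k < n) X k R).
Proof.
move=> dX; elim: (index_iota m n) => [|k ks IH].
  by apply: dyadic_ext (dyadic_nat 0) => R; rewrite big_nil.
by apply: dyadic_ext (dyadicD (dX k) IH) => R; rewrite big_cons.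
Qed.

Lemma dyadic_S1F p : dyadic (S1F ^~ p).
Proof.
apply: dyadicM (dyadic_nat 2) _; apply: dyadic_sum => k.
exact: dyadicM (dyadic_nat _) (dyadic_inv32 k).
Qed.

Lemma dyadic_S2F p : dyadic (S2F ^~ p).
Proof.
apply: dyadicM (dyadicN (dyadic_nat 4)) _; apply: dyadic_sum => k.
exact: dyadicM (dyadic_nat _) (dyadic_inv32 k).
Qed.

Lemma dyadic_rat_cong (F : fieldType) p X Y : p \in [pchar F] -> odd p ->
  dyadic X -> dyadic Y -> X F = Y F -> rat_cong p (X rat) (Y rat).
Proof.
move=> pc p_odd dX dY XYF; have [a [e XYE]] := dyadicD dX (dyadicN dY).
have p_dvd_a : (p %| a)%Z.
  have := XYE F (two_neq0 pc p_odd); rewrite XYF subrr => /esym/eqP.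
  by rewrite mulf_eq0 invr_eq0 (negbTE (pow2_neq0 pc p_odd e)) orbF -(dvdz_pcharf pc).
rewrite /rat_cong; set q := X rat - Y rat; have qE : q = a%:~R / 2 ^+ e by exact: XYE.
have numE : (numq q * (2 ^ e)%N%:Z = a * denq q)%R.
  apply/eqP; rewrite -(eqr_int rat) !intrM numqE qE -pmulrn natrX.
  by apply/eqP; field; rewrite expf_neq0.
have cop : coprimez p%:Z (2 ^ e)%N%:Z by rewrite coprimezE coprimeXr ?coprimen2.
by rewrite -(Gauss_dvdzl _ cop) numE dvdz_mulr.
Qed.

Theorem corollary3p4 (p : nat) (hp : prime p) (hodd : odd p) :
  let S1 : rat := (2 * \sum_((p.+1)./2 <= k < ((3 * p) %/ 4).+1)
                        ('C(4 * k, 2 * k))%:R / 32%:R ^+ k)%R in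
  let S2 : rat := (- 4%:R * \sum_(1 <= k < ((p.+1) %/ 4).+1)
                        ('C(4 * k - 2, 2 * k - 1))%:R / 32%:R ^+ k)%R in
  rat_cong p S1 S2 /\
  ((p %% 8 = 1 \/ p %% 8 = 7)%N -> rat_cong p S2 0%R) /\
  ((p %% 16 = 5 \/ p %% 16 = 11)%N -> rat_cong p S2 1%R) /\
  ((p %% 16 = 3 \/ p %% 16 = 13)%N -> rat_cong p S2 (-1)%R).
Proof.
move=> S1 S2.
(* Work in an algebraic closure L of F_p, which contains a root of X^8 + 1. *)
have [L [FpL _]] := countable_algebraic_closure 'F_p.
have pc : p \in [pchar L].
  by apply/andP; split=> //; rewrite -(rmorph_nat FpL) (pchar_Fp_0 hp) rmorph0.
have [z z8] : exists z : L, z ^+ 8 = -1.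
  have /closed_rootP[z /rootP] : size ('X^8 + 1%:P : {poly L}) != 1%N.
    by rewrite size_XnaddC.
  by rewrite hornerD hornerXn hornerC => /eqP; rewrite addr_eq0 => /eqP; exists z.
have S2_cong Y : dyadic Y -> S2F L p = Y L -> rat_cong p S2 (Y rat).
  exact: dyadic_rat_cong pc hodd (dyadic_S2F p).
split; [|split; [|split]].
- exact: dyadic_rat_cong pc hodd (dyadic_S1F p) (dyadic_S2F p) (S1F_eq_S2F pc hodd z8).
- by move=> /(S2F_pm1_mod8 pc hodd z8)[S2E _]; apply: S2_cong (dyadic_nat 0) _.
- by move=> /(S2F_pm5_mod16 pc hodd z8)[S2E _]; apply: S2_cong (dyadic_nat 1) _.
- move=> /(S2F_pm3_mod16 pc hodd z8)[S2E _].
  by apply: S2_cong (dyadicN (dyadic_nat 1)) _.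
Qed.
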